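(* The SISO tree refinement relation $\lesssim$ is reflexive and transitive on SISO trees.
   Context: Sorts: $\mathsf{S} ::= \mathtt{nat} \mid \mathtt{int} \mid \mathtt{bool} \mid \mathtt{unit}$; subsorting $\leq:$ is the least reflexive relation on sorts with $\mathtt{nat}\leq:\mathtt{int}$. Participants $\mathsf{p},\mathsf{q},\mathsf{r}$ and labels $\ell$ range over fixed sets. SISO trees are the possibly infinite terms generated coinductively by $\mathsf{W} ::= \mathtt{end} \mid \mathsf{p}?\ell(\mathsf{S}).\mathsf{W} \mid \mathsf{p}!\ell(\mathsf{S}).\mathsf{W}$ (input from / output to participant $\mathsf{p}$ of label $\ell$ with payload sort $\mathsf{S}$). $\mathrm{act}(\mathsf{W})$ is defined coinductively by $\mathrm{act}(\mathtt{end})=\emptyset$, $\mathrm{act}(\mathsf{p}?\ell(\mathsf{S}).\mathsf{W})=\{\mathsf{p}?\}\cup\mathrm{act}(\mathsf{W})$, $\mathrm{act}(\mathsf{p}!\ell(\mathsf{S}).\mathsf{W})=\{\mathsf{p}!\}\cup\mathrm{act}(\mathsf{W})$. For a participant $\mathsf{p}$, $\mathcal{A}^{(\mathsf{p})}$ ranges over nonempty finite sequences of inputs $\mathsf{q}?\ell(\mathsf{S})$ with $\mathsf{q}\neq\mathsf{p}$, and $\mathcal{B}^{(\mathsf{p})}$ over nonempty finite sequences whose elements are inputs $\mathsf{r}?\ell(\mathsf{S})$ (any $\mathsf{r}$) or outputs $\mathsf{q}!\ell(\mathsf{S})$ with $\mathsf{q}\neq\mathsf{p}$; $\mathcal{A}^{(\mathsf{p})}.\mathsf{W}$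 denotes the SISO tree obtained by prefixing $\mathsf{W}$ with the sequence. The SISO refinement $\lesssim$ is the largest relation on SISO trees closed backward under the rules: (ref-in) $\mathsf{p}?\ell(\mathsf{S}).\mathsf{W}\lesssim\mathsf{p}?\ell(\mathsf{S}').\mathsf{W}'$ if $\mathsf{S}'\leq:\mathsf{S}$ and $\mathsf{W}\lesssim\mathsf{W}'$; (ref-$\mathcal{A}$) $\mathsf{p}?\ell(\mathsf{S}).\mathsf{W}\lesssim\mathcal{A}^{(\mathsf{p})}.\mathsf{p}?\ell(\mathsf{S}').\mathsf{W}'$ if $\mathsf{S}'\leq:\mathsf{S}$, $\mathsf{W}\lesssim\mathcal{A}^{(\mathsf{p})}.\mathsf{W}'$ and $\mathrm{act}(\mathsf{W})=\mathrm{act}(\mathcal{A}^{(\mathsf{p})}.\mathsf{W}')$; (ref-out) $\mathsf{p}!\ell(\mathsf{S}).\mathsf{W}\lesssim\mathsf{p}!\ell(\mathsf{S}').\mathsf{W}'$ if $\mathsf{S}\leq:\mathsf{S}'$ and $\mathsf{W}\lesssim\mathsf{W}'$; (ref-$\mathcal{B}$) $\mathsf{p}!\ell(\mathsf{S}).\mathsf{W}\lesssim\mathcal{B}^{(\mathsf{p})}.\mathsf{p}!\ell(\mathsf{S}').\mathsf{W}'$ if $\mathsf{S}\leq:\mathsf{S}'$, $\mathsf{W}\lesssim\mathcal{B}^{(\mathsf{p})}.\mathsf{W}'$ and $\mathrm{act}(\mathsf{W})=\mathrm{act}(\mathcal{B}^{(\mathsf{p})}.\mathsf{W}')$; (ref-end)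 $\mathtt{end}\lesssim\mathtt{end}$. *)

From Stdlib Require Import List.
Import ListNotations.

Set Implicit Arguments.

Inductive sort := Snat | Sint | Sbool | Sunit.

Inductive subsort : sort -> sort -> Prop :=
| subsort_refl : forall So, subsort So So
| subsort_nat_int : subsort Snat Sint.

Section Siso.
Variables (Part Lab : Type).

CoInductive siso : Type :=
| Wend : siso
| Win : Part -> Lab -> sort -> siso -> siso
| Wout : Part -> Lab -> sort -> siso -> siso.

Inductive prefix : Type :=
| Pin : Part -> Lab -> sort -> prefix
| Pout : Part -> Lab -> sort -> prefix.

Definition prefix_one (a : prefix) (W : siso) : siso :=
  match a with
  | Pin p l So => Win p l So W
  | Pout p l So => Wout p l So W
  end.

Definition prefix_seq (s : list prefix) (W : siso) : siso :=
  fold_right prefix_one W s.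

Definition is_A (p : Part) (s : list prefix) : Prop :=
  s <> [] /\
  Forall (fun a => exists q l So, a = Pin q l So /\ q <> p) s.

Definition is_B (p : Part) (s : list prefix) : Prop :=
  s <> [] /\
  Forall (fun a => (exists r l So, a = Pin r l So) \/
                   (exists q l So, a = Pout q l So /\ q <> p)) s.

Inductive direction := Dir_in | Dir_out.

Inductive in_act : Part * direction -> siso -> Prop :=
| in_act_in_here : forall p l So W, in_act (p, Dir_in) (Win p l So W)
| in_act_out_here : forall p l So W, in_act (p, Dir_out) (Wout p l So W)
| in_act_in_later : forall x p l So W, in_act x W -> in_act x (Win p l So W)
| in_act_out_later : forall x p l So W, in_act x W -> in_act x (Wout p l So W).

Definition same_act (W W' : siso) : Prop :=
  forall x, in_act x W <-> in_act x W'.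

CoInductive refines : siso -> siso -> Prop :=
| ref_in : forall p l So So' W W',
    subsort So' So -> refines W W' ->
    refines (Win p l So W) (Win p l So' W')
| ref_A : forall p l So So' W W' A,
    is_A p A -> subsort So' So ->
    refines W (prefix_seq A W') ->
    same_act W (prefix_seq A W') ->
    refines (Win p l So W) (prefix_seq A (Win p l So' W'))
| ref_out : forall p l So So' W W',
    subsort So So' -> refines W W' ->
    refines (Wout p l So W) (Wout p l So' W')
| ref_B : forall p l So So' W W' B,
    is_B p B -> subsort So So' ->
    refines W (prefix_seq B W') ->
    same_act W (prefix_seq B W') ->
    refines (Wout p l So W) (prefix_seq B (Wout p l So' W'))
| ref_end : refines Wend Wend.

End Siso.

(** Every refinement rule has the shape [b.W ≲ C.c.V]: the prefix [c] refines
    [b] (same participant, label and direction, sorts related by subsorting)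
    and every action of [C] may be anticipated before [b]. For transitivity, suppose [b.W ≲ A.c.V] and
    [A.c.V ≲ Z]. Refining the tree [A.c.V] one prefix of [A] at a time never
    lets [c] overtake an action of [A], and every action anticipated before
    an action of [A] may also be anticipated before [c]; hence
    [Z = A'.d.Z'] with [c] refined by [d], [A'] anticipatable before [c], and
    [A.V ≲ A'.Z'], which closes the coinduction. The side conditions on
    [act] hold because refinement preserves [act]. *)

From Stdlib Require Import List.
Import ListNotations.

Set Implicit Arguments.
Unset Strict Implicit.

Lemma subsort_trans (S1 S2 S3 : sort) :
  subsort S1 S2 -> subsort S2 S3 -> subsort S1 S3.
Proof. intros [] H23; [exact H23 | inversion H23; constructor]. Qed.

Section Refinement.
Variables (Part Lab : Type).
Notation siso := (siso Part Lab).
Notation prefix := (prefix Part Lab).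

Definition actof (a : prefix) : Part * direction :=
  match a with Pin p _ _ => (p, Dir_in) | Pout p _ _ => (p, Dir_out) end.

(* [can_precede x (p, Dir_in)] is membership in A^(p), and
   [can_precede x (p, Dir_out)] membership in B^(p). *)
Definition can_precede (x y : Part * direction) : Prop :=
  match x, y with
  | (q, Dir_in), (p, Dir_in) => q <> p
  | (_, Dir_in), (_, Dir_out) => True
  | (_, Dir_out), (_, Dir_in) => False
  | (q, Dir_out), (p, Dir_out) => q <> p
  end.

Definition prefix_refines (b c : prefix) : Prop :=
  match b, c with
  | Pin p l So, Pin p' l' So' => p' = p /\ l' = l /\ subsort So' So
  | Pout p l So, Pout p' l' So' => p' = p /\ l' = l /\ subsort So So'
  | _, _ => False
  end.

Lemma prefix_refines_actof (b c : prefix) :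
  prefix_refines b c -> actof b = actof c.
Proof. destruct b, c; cbn; intuition congruence. Qed.

Lemma prefix_refines_trans (b c d : prefix) :
  prefix_refines b c -> prefix_refines c d -> prefix_refines b d.
Proof.
  destruct b, c, d; cbn; try contradiction;
    intros (-> & -> & H1) (-> & -> & H2); eauto using subsort_trans.
Qed.

Lemma can_precede_in_iff (p : Part) (a : prefix) :
  can_precede (actof a) (p, Dir_in) <->
  exists q l So, a = Pin q l So /\ q <> p.
Proof.
  destruct a as [q l So | q l So]; cbn; split.
  - eauto.
  - intros (? & ? & ? & [= <- _ _] & Hq); exact Hq.
  - contradiction.
  - intros (? & ? & ? & [=] & _).
Qed.

Lemma can_precede_out_iff (p : Part) (a : prefix) :
  can_precede (actof a) (p, Dir_out) <->
  (exists r l So, a = Pin r l So) \/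
  (exists q l So, a = Pout q l So /\ q <> p).
Proof.
  destruct a as [q l So | q l So]; cbn; split.
  - eauto.
  - trivial.
  - eauto 6.
  - intros [(? & ? & ? & [=]) | (? & ? & ? & [= <- _ _] & Hq)]; exact Hq.
Qed.

Lemma is_A_iff (p : Part) (A : list prefix) :
  is_A p A <-> A <> [] /\ Forall (fun a => can_precede (actof a) (p, Dir_in)) A.
Proof.
  split; intros [HA HF]; split; trivial;
    refine (Forall_impl _ _ HF); intro; apply can_precede_in_iff.
Qed.

Lemma is_B_iff (p : Part) (B : list prefix) :
  is_B p B <-> B <> [] /\ Forall (fun a => can_precede (actof a) (p, Dir_out)) B.
Proof.
  split; intros [HB HF]; split; trivial;
    refine (Forall_impl _ _ HF); intro; apply can_precede_out_iff.
Qed.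

Lemma prefix_seq_cons (a : prefix) (C : list prefix) (W : siso) :
  prefix_seq (a :: C) W = prefix_one a (prefix_seq C W).
Proof. reflexivity. Qed.

Lemma prefix_seq_app (C D : list prefix) (W : siso) :
  prefix_seq (C ++ D) W = prefix_seq C (prefix_seq D W).
Proof. apply fold_right_app. Qed.

Lemma prefix_one_inj (a b : prefix) (W V : siso) :
  prefix_one a W = prefix_one b V -> a = b /\ W = V.
Proof. destruct a, b; cbn; intros [=]; subst; auto. Qed.

Lemma prefix_seq_eq_inv (C A : list prefix) (X Z : siso) :
  prefix_seq C X = prefix_seq A Z ->
  (exists A2, A = C ++ A2 /\ X = prefix_seq A2 Z) \/
  (exists a C2, C = A ++ a :: C2 /\ Z = prefix_one a (prefix_seq C2 X)).
Proof.
  revert A; induction C as [|c C IH]; intros [|a A] E.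
  - left; exists []; auto.
  - left; exists (a :: A); auto.
  - right; exists c, C; auto.
  - rewrite !prefix_seq_cons in E; apply prefix_one_inj in E as [<- E].
    destruct (IH _ E) as [(A2 & -> & ->) | (a' & C2 & -> & ->)].
    + left; exists A2; auto.
    + right; exists a', C2; auto.
Qed.

Lemma in_act_cons (x : Part * direction) (b : prefix) (W : siso) :
  in_act x (prefix_one b W) <-> x = actof b \/ in_act x W.
Proof.
  destruct b; cbn; split; [inversion 1; auto | intros [-> | H]; constructor; auto
                          | inversion 1; auto | intros [-> | H]; constructor; auto].
Qed.

Lemma in_act_prefix_seq_cons (x : Part * direction) (C : list prefix)
    (c : prefix) (V : siso) :
  in_act x (prefix_seq C (prefix_one c V)) <->
  x = actof c \/ in_act x (prefix_seq C V).
Proof.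
  induction C as [|a C IH]; [apply in_act_cons|].
  rewrite !prefix_seq_cons, !in_act_cons, IH; tauto.
Qed.

Lemma in_act_cons_ind (P : Part * direction -> siso -> Prop) :
  (forall b W, P (actof b) (prefix_one b W)) ->
  (forall x b W, in_act x W -> P x W -> P x (prefix_one b W)) ->
  forall x W, in_act x W -> P x W.
Proof.
  intros Hhere Hlater x W H; induction H.
  - exact (Hhere (Pin p l So) W).
  - exact (Hhere (Pout p l So) W).
  - exact (Hlater x (Pin p l So) W H IHin_act).
  - exact (Hlater x (Pout p l So) W H IHin_act).
Qed.

Inductive refines_step (R : siso -> siso -> Prop) : siso -> siso -> Prop :=
| step_end : refines_step R (Wend _ _) (Wend _ _)
| step_cons (b c : prefix) (C : list prefix) (W V : siso) :
    Forall (fun a => can_precede (actof a) (actof b)) C ->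
    prefix_refines b c ->
    R W (prefix_seq C V) ->
    (C <> [] -> same_act W (prefix_seq C V)) ->
    refines_step R (prefix_one b W) (prefix_seq C (prefix_one c V)).

Lemma refines_step_mono (R R' : siso -> siso -> Prop) :
  (forall W V, R W V -> R' W V) ->
  forall W V, refines_step R W V -> refines_step R' W V.
Proof. intros HR W V []; constructor; auto. Qed.

Lemma refines_unfold (W V : siso) :
  refines W V -> refines_step (@refines Part Lab) W V.
Proof.
  destruct 1 as [p l So So' W V HS HWV | p l So So' W V A HA HS HWV Hact
               | p l So So' W V HS HWV | p l So So' W V B HB HS HWV Hact | ].
  - apply (@step_cons _ (Pin p l So) (Pin p l So') []); cbn; auto.
    contradiction.
  - apply is_A_iff in HA as [_ HA].
    apply (@step_cons _ (Pin p l So) (Pin p l So')); cbn; auto.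
  - apply (@step_cons _ (Pout p l So) (Pout p l So') []); cbn; auto.
    contradiction.
  - apply is_B_iff in HB as [_ HB].
    apply (@step_cons _ (Pout p l So) (Pout p l So')); cbn; auto.
  - constructor.
Qed.

Lemma refines_coind (R : siso -> siso -> Prop) :
  (forall W V, R W V -> refines_step R W V) ->
  forall W V, R W V -> refines W V.
Proof.
  intros Hstep; cofix CIH; intros W V HR.
  destruct (Hstep W V HR) as [| b c C W' V' HC Hbc HR' Hact]; [constructor|].
  destruct b as [p l So | p l So], c as [p' l' So' | p' l' So']; cbn in Hbc;
    try contradiction; destruct Hbc as (<- & <- & HS);
    destruct C as [|a C]; cbn [prefix_one].
  - apply ref_in; [exact HS | exact (CIH _ _ HR')].
  - apply ref_A; [apply is_A_iff; split; [discriminate | exact HC] | exact HS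
                 | exact (CIH _ _ HR') | apply Hact; discriminate].
  - apply ref_out; [exact HS | exact (CIH _ _ HR')].
  - apply ref_B; [apply is_B_iff; split; [discriminate | exact HC] | exact HS
                 | exact (CIH _ _ HR') | apply Hact; discriminate].
Qed.

Lemma refines_fold (W V : siso) :
  refines_step (@refines Part Lab) W V -> refines W V.
Proof. apply (refines_coind (refines_step_mono refines_unfold)). Qed.

Lemma refines_cons_l_inv (b : prefix) (W V : siso) :
  refines (prefix_one b W) V ->
  exists C c V', Forall (fun a => can_precede (actof a) (actof b)) C /\
    V = prefix_seq C (prefix_one c V') /\ prefix_refines b c /\
    refines W (prefix_seq C V').
Proof.
  intros HWV; remember (prefix_one b W) as bW eqn:E.
  destruct (refines_unfold HWV) as [| b' c C W' V' HC Hbc HW' _];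
    [destruct b; discriminate|].
  apply prefix_one_inj in E as [-> ->]; eauto 7.
Qed.

(* The second case comes from a rule with a nonempty anticipated prefix,
   whose [act] side condition gives the inclusion. *)
Lemma refines_cons_r_inv (W : siso) (a : prefix) (V : siso) :
  refines W (prefix_one a V) ->
  (exists b W', W = prefix_one b W' /\ actof b = actof a /\ refines W' V) \/
  (forall x, in_act x (prefix_one a V) -> in_act x W).
Proof.
  intros HWV; remember (prefix_one a V) as aV eqn:E.
  destruct (refines_unfold HWV) as [| b c C W' V' _ Hbc HW' Hact];
    [destruct a; discriminate|].
  destruct C as [|a' C].
  - apply prefix_one_inj in E as [-> ->].
    left; exists b, W'; auto using prefix_refines_actof.
  - right; intros x Hx; rewrite in_act_prefix_seq_cons in Hx.
    apply in_act_cons; destruct Hx as [-> | Hx].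
    + left; symmetry; exact (prefix_refines_actof Hbc).
    + right; apply Hact; [discriminate | exact Hx].
Qed.

Lemma in_act_refines_l (x : Part * direction) (W : siso) :
  in_act x W -> forall V, refines W V -> in_act x V.
Proof.
  revert x W; apply (in_act_cons_ind
    (P := fun (x : Part * direction) (W : siso) => forall V, refines W V -> in_act x V)).
  - intros b W V HWV.
    destruct (refines_cons_l_inv HWV) as (C & c & V' & _ & -> & Hbc & _).
    apply in_act_prefix_seq_cons; left; exact (prefix_refines_actof Hbc).
  - intros x b W _ IH V HWV.
    destruct (refines_cons_l_inv HWV) as (C & c & V' & _ & -> & _ & HW).
    apply in_act_prefix_seq_cons; right; exact (IH _ HW).
Qed.

Lemma in_act_refines_r (x : Part * direction) (V : siso) :
  in_act x V -> forall W, refines W V -> in_act x W.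
Proof.
  revert x V; apply (in_act_cons_ind
    (P := fun (x : Part * direction) (V : siso) => forall W, refines W V -> in_act x W)).
  - intros a V W HWV.
    destruct (refines_cons_r_inv HWV) as [(b & W' & -> & Hba & _) | Hsub].
    + apply in_act_cons; left; symmetry; exact Hba.
    + apply Hsub, in_act_cons; left; reflexivity.
  - intros x a V Hx IH W HWV.
    destruct (refines_cons_r_inv HWV) as [(b & W' & -> & _ & HW') | Hsub].
    + apply in_act_cons; right; exact (IH _ HW').
    + apply Hsub, in_act_cons; right; exact Hx.
Qed.

Lemma refines_same_act (W V : siso) : refines W V -> same_act W V.
Proof.
  intros HWV x; split; intros Hx;
    [exact (in_act_refines_l Hx HWV) | exact (in_act_refines_r Hx HWV)].
Qed.

Lemma refines_cons (C : list prefix) (b c : prefix) (W V : siso) :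
  Forall (fun a => can_precede (actof a) (actof b)) C ->
  prefix_refines b c ->
  refines W (prefix_seq C V) ->
  refines (prefix_one b W) (prefix_seq C (prefix_one c V)).
Proof.
  intros HC Hbc HW; apply refines_fold; constructor; auto.
  intros _; exact (refines_same_act HW).
Qed.

Lemma refines_prefix_seq_inv (A : list prefix) (b : prefix) (W Z : siso) :
  Forall (fun a => can_precede (actof a) (actof b)) A ->
  refines (prefix_seq A (prefix_one b W)) Z ->
  exists A' c Z', Forall (fun a => can_precede (actof a) (actof b)) A' /\
    Z = prefix_seq A' (prefix_one c Z') /\ prefix_refines b c /\
    refines (prefix_seq A W) (prefix_seq A' Z').
Proof.
  revert Z; induction A as [|a A IH]; intros Z HA HZ; [exact (refines_cons_l_inv HZ)|].
  apply Forall_cons_iff in HA as [Ha HA]; rewrite prefix_seq_cons in HZ.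
  destruct (refines_cons_l_inv HZ) as (C & a' & Z0 & HC & -> & Haa' & HZ0).
  destruct (IH _ HA HZ0) as (A1 & c & Z' & HA1 & HCZ & Hbc & HW).
  rewrite prefix_seq_cons.
  destruct (prefix_seq_eq_inv HCZ) as [(A2 & -> & ->) | (d & C2 & -> & E)].
  - apply Forall_app in HA1 as [HC' HA2].
    exists (C ++ a' :: A2), c, Z'; repeat split; trivial.
    + apply Forall_app; split; trivial; constructor; trivial.
      rewrite <- (prefix_refines_actof Haa'); exact Ha.
    + rewrite prefix_seq_app; reflexivity.
    + rewrite prefix_seq_app; apply refines_cons; trivial.
      rewrite prefix_seq_app in HW; exact HW.
  - apply prefix_one_inj in E as [<- ->].
    apply Forall_app in HC as [HA1' HC2]; apply Forall_cons_iff in HC2 as [_ HC2].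
    exists A1, c, (prefix_seq C2 (prefix_one a' Z0)); repeat split; trivial.
    + rewrite prefix_seq_app; reflexivity.
    + rewrite <- prefix_seq_app.
      apply refines_cons; [apply Forall_app; auto | exact Haa' |].
      rewrite <- prefix_seq_app in HW; exact HW.
Qed.

Lemma refines_refl (W : siso) : refines W W.
Proof.
  revert W; cofix CIH; intros [| p l So W | p l So W].
  - apply ref_end.
  - apply ref_in; [apply subsort_refl | apply CIH].
  - apply ref_out; [apply subsort_refl | apply CIH].
Qed.

Lemma refines_trans (W1 W2 W3 : siso) :
  refines W1 W2 -> refines W2 W3 -> refines W1 W3.
Proof.
  intros H12 H23.
  apply (refines_coind (R := fun X Z => exists Y, refines X Y /\ refines Y Z)); [|eauto].
  clear; intros X Z (Y & HXY & HYZ).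
  destruct (refines_unfold HXY) as [| b c A X' Y' HA Hbc HXY' _].
  - inversion HYZ; constructor.
  - rewrite (prefix_refines_actof Hbc) in HA.
    destruct (refines_prefix_seq_inv HA HYZ) as (A' & d & Z' & HA' & -> & Hcd & HYZ').
    constructor.
    + rewrite (prefix_refines_actof Hbc); exact HA'.
    + exact (prefix_refines_trans Hbc Hcd).
    + eauto.
    + intros _ x; rewrite (refines_same_act HXY' x); exact (refines_same_act HYZ' x).
Qed.

End Refinement.

Theorem lemma3p3 (Part Lab : Type) :
  (forall W : siso Part Lab, refines W W) /\
  (forall W1 W2 W3 : siso Part Lab,
      refines W1 W2 -> refines W2 W3 -> refines W1 W3).
Proof. split; [apply refines_refl | apply refines_trans]. Qed.
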